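(* Let $X$ be a Banach space with an extended $\lambda$-approximative basis $(P_\alpha)_{\alpha\in\mathscr{D}}$. Assume that $K$ is a separable subset of $X$ and $(y_n)$ is a semi-normalized weakly null sequence in $K$. Then there exist an increasing sequence $(\alpha_{m_i})_{i\ge0}$ in $\mathscr{D}$ and a basic subsequence $(x_{n_i})$ of $(y_n)$ such that (1) $\lim_{i\to\infty}\big\|P_{\alpha_{m_i}}\big(\frac1N\sum_{k=1}^N x_{n_{i+k}}\big)\big\|=0$ for all $N\in\mathbb{N}$; (2) $\lim_{i\to\infty}\|x_{n_i}-P_{\alpha_{m_i}}(x_{n_i})\|=0$; (3) $\lim_{i\to\infty}\|x-P_{\alpha_{m_i}}(x)\|=0$ for all $x\in K$.
   Context: $X$ has an extended $\lambda$-approximative basis ($\lambda\ge1$) if there is a net $(P_\alpha)_{\alpha\in\mathscr{D}}$ of finite-rank bounded linear operators on $X$ with $x=\lim_\alpha P_\alpha(x)$ for all $x\in X$ and $\sup_\alpha\|P_\alpha\|\le\lambda$. A sequence is semi-normalized if $0<\inf_n\|y_n\|\le\sup_n\|y_n\|<\infty$; it is basic if it is a Schauder basis of its closed linear span. *)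

From HB Require Import structures.
From mathcomp Require Import all_boot all_order all_algebra.
From mathcomp Require Import all_classical all_reals all_analysis.
Set Implicit Arguments. Unset Strict Implicit. Unset Printing Implicit Defensive.
Import Order.TTheory GRing.Theory Num.Theory.
Import numFieldNormedType.Exports.
Local Open Scope classical_set_scope.
Local Open Scope ring_scope.

Section Defs.
Variables (R : realType) (X : normedModType R).

Definition directed_set (D : Type) (le : D -> D -> Prop) : Prop :=
  [/\ inhabited D, (forall a, le a a),
      (forall a b c, le a b -> le b c -> le a c)
    & (forall a b, exists c, le a c /\ le b c)].

Definition linear_op (T : X -> X) : Prop :=
  forall (k : R) (x y : X), T (k *: x + y) = k *: T x + T y.

Definition finite_rank (T : X -> X) : Prop :=
  exists s : seq X, forall x, exists c : 'I_(size s) -> R,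
    T x = \sum_(i < size s) c i *: s`_i.

Definition op_norm_le (T : X -> X) (lam : R) : Prop :=
  forall x, `|T x| <= lam * `|x|.

Definition net_cvg (D : Type) (le : D -> D -> Prop) (f : D -> X) (l : X) : Prop :=
  forall e : R, 0 < e -> exists a0, forall a, le a0 a -> `|l - f a| < e.

Definition ext_approx_basis (D : Type) (le : D -> D -> Prop) (P : D -> X -> X)
    (lam : R) : Prop :=
  [/\ directed_set le,
      (forall a, linear_op (P a) /\ finite_rank (P a)),
      (forall a, op_norm_le (P a) lam)
    & (forall x, net_cvg le (fun a => P a x) x)].

Definition separable_set (K : set X) : Prop :=
  exists S : set X, [/\ countable S, S `<=` K & K `<=` closure S].

Definition semi_normalized (y : nat -> X) : Prop :=
  exists c C : R, 0 < c /\ forall n, c <= `|y n| <= C.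

Definition weakly_null (y : nat -> X) : Prop :=
  forall f : X -> R,
    (forall (k : R) (x z : X), f (k *: x + z) = k * f x + f z) ->
    continuous f ->
    (fun n => f (y n)) @ \oo --> (0 : R).

Definition lin_span (x : nat -> X) : set X :=
  [set z | exists (N : nat) (c : nat -> R), z = \sum_(i < N) c i *: x i].

Definition series_to (a : nat -> R) (x : nat -> X) (z : X) : Prop :=
  (fun N => \sum_(i < N) a i *: x i) @ \oo --> z.

Definition basic_seq (x : nat -> X) : Prop :=
  forall z, closure (lin_span x) z ->
    (exists a, series_to a x z) /\
    (forall a b, series_to a x z -> series_to b x z -> a = b).

End Defs.

From HB Require Import structures.
From mathcomp Require Import all_boot all_order all_algebra.
From mathcomp Require Import all_classical all_reals all_analysis.
From mathcomp Require Import ring lra.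
Import Order.TTheory GRing.Theory Num.Theory.
Import numFieldNormedType.Exports.
Local Open Scope classical_set_scope.
Local Open Scope ring_scope.
Set Implicit Arguments. Unset Strict Implicit. Unset Printing Implicit Defensive.

(* Finite-rank bounded operators map weakly null sequences to norm-null ones:
   writing the range inside the span of a finite list, either the first vector
   stays at positive distance from the span of the others, and its coefficient
   is a bounded functional, or it lies in that (closed) span and can be dropped.
   Hence, choosing n_k and alpha_k alternately, P_(alpha_j) (j < k) almost
   kills y_(n_k), while P_(alpha_k) almost fixes y_(n_j) (j <= k) and the first
   k points of a dense sequence of K, with errors eps_k summing to at most c/4,
   c a lower bound of the norms |y_n|.  Then every partial sum of
   x_i = y_(n_i) is at most 2 lam times any longer one, so x is basic by
   Grunblum's criterion; (1) and (2) follow from eps_k -> 0, and (3) because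
   operators bounded by lam that converge on a set converge on its closure. *)

Section LinearOp.
Variables (R : realType) (X : normedModType R) (T : X -> X).
Hypothesis linT : linear_op T.

Lemma linear_op0 : T 0 = 0.
Proof.
have := linT 1 0 0; rewrite !scale1r !addr0 => T00.
by apply: (addrI (T 0)); rewrite addr0 -T00.
Qed.

Lemma linear_opD x z : T (x + z) = T x + T z.
Proof. by rewrite -[x in LHS]scale1r linT scale1r. Qed.

Lemma linear_opZ k x : T (k *: x) = k *: T x.
Proof. by rewrite -[k *: x]addr0 linT linear_op0 addr0. Qed.

Lemma linear_opB x z : T (x - z) = T x - T z.
Proof. by rewrite linear_opD -scaleN1r linear_opZ scaleN1r. Qed.

Lemma linear_op_sum (I : Type) (r : seq I) (p : pred I) (F : I -> X) :
  T (\sum_(i <- r | p i) F i) = \sum_(i <- r | p i) T (F i).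
Proof.
by elim/big_rec2: _ => [|i y1 y2 _ <-]; rewrite ?linear_op0 ?linear_opD.
Qed.

Lemma linear_op_mean_le (u : nat -> X) (r : R) N : (0 < N)%N ->
    (forall k, (0 < k)%N -> `|T (u k)| <= r) ->
  `|T (N%:R^-1 *: \sum_(1 <= k < N.+1) u k)| <= r.
Proof.
move=> N0 ur; rewrite linear_opZ linear_op_sum normrZ ger0_norm ?invr_ge0 ?ler0n //.
rewrite ler_pdivrMl ?ltr0n //; apply: le_trans (ler_norm_sum _ _ _) _.
have -> : N%:R * r = \sum_(1 <= k < N.+1) r by rewrite sumr_const_nat subn1 mulr_natl.
by apply: ler_sum_nat => k /andP[k1 _]; exact: ur.
Qed.

End LinearOp.

Section Analysis.
Variable R : realType.

Lemma cvg_of_tail_dist_le (V : normedModType R) (f : nat -> V) z (M : R) (N : nat -> nat) :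
  (forall m n, (N m <= n)%N -> `|z - f n| <= M * m.+1%:R^-1) -> f @ \oo --> z.
Proof.
move=> fz; apply/cvgrPdist_lt => e e0.
have M1 : 0 < `|M| + 1 by rewrite ltr_pwDr.
have /cvgr0_norm_lt/(_ _ (divr_gt0 e0 M1))[m _ /(_ m (leqnn m))] := @cvg_harmonic R.
rewrite /= ger0_norm // ltr_pdivlMr // mulrC => Me.
exists (N m) => // n /= Nn; apply: le_lt_trans (fz m n Nn) (le_lt_trans _ Me).
by rewrite ler_wpM2r // (le_trans (ler_norm _)) // lerDl.
Qed.

Lemma cvg_of_dist_lt_harmonic (V : normedModType R) (f : nat -> V) w :
  (forall k, `|w - f k| < k.+1%:R^-1) -> f @ \oo --> w.
Proof.
move=> fw; apply: (@cvg_of_tail_dist_le _ _ _ 1 id) => m n mn.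
rewrite mul1r; apply/ltW/(lt_le_trans (fw n)).
by rewrite lef_pV2 ?posrE ?ltr0n // ler_nat ltnS.
Qed.

Lemma cvgn_of_dist_le (a b : nat -> R) :
  b @ \oo --> 0 -> (forall m n, `|a m - a n| <= b m + b n) -> cvgn a.
Proof.
move=> /cvgr0_norm_lt b0 ab; apply/cauchy_cvgP/cauchy_exP => e e0.
have b2 := b0 _ (divr_gt0 e0 (ltr0n _ 2)).
near \oo => N; exists (a N).
change (\forall n \near \oo, ball (a N) e (a n)); near=> n; rewrite -ball_normE /=.
apply: le_lt_trans (ab N n) _; rewrite [e]splitr.
by apply: ltrD; apply: le_lt_trans (ler_norm _) _; [near: N | near: n].
Unshelve. all: by end_near. Qed.

Lemma bounded_linear_continuous (V : normedModType R) (f : V -> R) (M : R) :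
  (forall (k : R) (x z : V), f (k *: x + z) = k * f x + f z) ->
  (forall x, `|f x| <= M * `|x|) -> continuous f.
Proof.
move=> linf fM x; apply/cvgrPdist_lt => e e0.
have M1 : 0 < `|M| + 1 by rewrite ltr_pwDr // normr_ge0.
near=> t; have -> : f x - f t = f (x - t).
  by rewrite [x - t]addrC -[- t]scaleN1r linf mulN1r addrC.
apply: le_lt_trans (fM _) _; apply: (@le_lt_trans _ _ ((`|M| + 1) * `|x - t|)).
  by rewrite ler_wpM2r // (le_trans (ler_norm _)) // lerDl.
rewrite mulrC -ltr_pdivlMr //; near: t.
by apply: cvgr_dist_lt; [exact: cvg_id | rewrite divr_gt0].
Unshelve. all: by end_near. Qed.

Lemma closure_normP (V : normedModType R) (A : set V) z :
  closure A z <-> forall e, 0 < e -> exists2 u, A u & `|z - u| < e.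
Proof.
split=> [zA e e0|zA B /nbhs_ballP [e /= e0 zeB]].
  have [u [Au zu]] := zA _ (nbhsx_ballx z e e0).
  by exists u; move: zu; rewrite -ball_normE.
by have [u Au zu] := zA e e0; exists u; split=> //; apply: zeB; rewrite -ball_normE.
Qed.

Lemma summable_null_seq (r : R) : 0 < r ->
  exists eps : nat -> R, [/\ forall j, 0 < eps j,
    forall j k, (j <= k)%N -> eps k <= eps j,
    eps @ \oo --> 0 & forall N, \sum_(j < N) eps j <= r].
Proof.
(* r / ((j + 1) (j + 2)) = r / (j + 1) - r / (j + 2) telescopes. *)
move=> r0; exists (fun j => r / (j.+1 * j.+2)%:R); split.
- by move=> j; rewrite divr_gt0 // ltr0n muln_gt0.
- move=> j k jk; rewrite ler_pM2l // lef_pV2 ?posrE ?ltr0n ?muln_gt0 //.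
  by rewrite ler_nat leq_mul // ltnS.
- apply: (@squeeze_cvgr _ _ _ _ (fun=> 0) (fun j => r * j.+1%:R^-1)).
  + near=> j; rewrite divr_ge0 ?ler0n ?(ltW r0) //= ler_pM2l //.
    by rewrite lef_pV2 ?posrE ?ltr0n ?muln_gt0 // ler_nat leq_pmulr.
  + exact: cvg_cst.
  + by rewrite -(mulr0 r); apply: cvgMl_tmp; exact: cvg_harmonic.
- move=> N; suff -> : \sum_(j < N) r / (j.+1 * j.+2)%:R = r * (1 - N.+1%:R^-1).
    by rewrite -[X in _ <= X]mulr1 ler_pM2l // lerBlDr lerDl invr_ge0 ler0n.
  elim: N => [|N IH]; first by rewrite big_ord0 invr1 subrr mulr0.
  rewrite big_ord_recr /= IH natrM.
  by field; apply/andP; split; apply/eqP; have := ler0n R N; lra.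
Unshelve. all: by end_near. Qed.

End Analysis.

Lemma cvg_closure_of_bounded (R : realType) (X : normedModType R)
    (Q : nat -> X -> X) (lam : R) (A : set X) x :
  (forall k, linear_op (Q k)) -> (forall k, op_norm_le (Q k) lam) ->
  (forall a, A a -> (fun k => `|a - Q k a|) @ \oo --> 0) -> closure A x ->
  (fun k => `|x - Q k x|) @ \oo --> 0.
Proof.
move=> linQ Q_le QA /closure_normP xA; apply/cvgr0Pnorm_lt => r r0.
have l1 : 0 < 1 + `|lam| by rewrite ltr_pwDl.
have [a Aa xa] := xA _ (divr_gt0 (divr_gt0 r0 (ltr0n _ 2)) l1).
near=> k; rewrite normr_id.
have -> : x - Q k x = (x - a) + (a - Q k a) + Q k (a - x).
  by rewrite (linear_opB (linQ k)) !addrA !subrK.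
have Qxa : `|Q k (a - x)| <= `|lam| * `|x - a|.
  by rewrite distrC; apply: le_trans (Q_le k _) _; rewrite ler_wpM2r // ler_norm.
have xa' : `|x - a| + `|lam| * `|x - a| < r / 2.
  by rewrite -[X in X + _]mul1r -mulrDl mulrC -ltr_pdivlMr.
have aQa : `|a - Q k a| < r / 2.
  near: k; have /cvgr0_norm_lt/(_ _ (divr_gt0 r0 (ltr0n _ 2))) := QA a Aa.
  by apply: filterS => k; rewrite normr_id.
apply: le_lt_trans (ler_normD _ _) _; apply: le_lt_trans (lerD (ler_normD _ _) Qxa) _.
move: xa' aQa; set t := `|lam| * _; lra.
Unshelve. all: by end_near. Qed.

Lemma near_forall_ltn (T : Type) (F : set_system T) (Q : nat -> T -> Prop) k :
  Filter F -> (forall j, (j < k)%N -> \forall t \near F, Q j t) ->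
  \forall t \near F, forall j, (j < k)%N -> Q j t.
Proof.
move=> FF FQ; have := @filter_forall T 'I_k (fun j => Q j) F FF (fun j => FQ j (ltn_ord j)).
by apply: filterS => t Qt j jk; exact: (Qt (Ordinal jk)).
Qed.

(* Dependent choice where the k-th choice may use all earlier ones: [Q k v t]
   is meant to inspect [v] below [k] only. *)
Lemma dependent_choice_prefix (T : Type) (x0 : T) (Q : nat -> (nat -> T) -> T -> Prop) :
  (forall k u, exists t, Q k u t) ->
  exists u : nat -> T, forall k,
    exists2 v, (forall j, (j < k)%N -> v j = u j) & Q k v (u k).
Proof.
move=> Qex; have /choice [step stepQ] : forall p : nat * (nat -> T), exists t, Q p.1 p.2 t.
  by case=> k u; exact: Qex.
pose fix pre k := if k is k'.+1
  then fun j => if (j < k')%N then pre k' j else step (k', pre k') else fun=> x0.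
exists (fun k => step (k, pre k)) => k; exists (pre k); last exact: stepQ (k, pre k).
elim: k => [//|k IH] j; rewrite ltnS leq_eqVlt => /orP[/eqP ->|jk] /=.
  by rewrite ltnn.
by rewrite jk IH.
Qed.

Definition tail_filter (D : Type) (le : D -> D -> Prop) : set_system D :=
  filter_from setT (fun a => [set b | le a b]).

Lemma tail_filter_proper (D : Type) (le : D -> D -> Prop) :
  directed_set le -> ProperFilter (tail_filter le).
Proof.
case=> [[a0] refl trans ub]; apply: filter_from_proper; last by move=> a _; exists a.
apply: filter_fromT_filter; first by exists a0.
by move=> a b; have [c [ac bc]] := ub a b; exists c => d cd; split; exact: trans cd.
Qed.

Lemma net_cvg_near (R : realType) (X : normedModType R) (D : Type)
    (le : D -> D -> Prop) (f : D -> X) l : net_cvg le f l ->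
  forall r, 0 < r -> \forall b \near tail_filter le, `|l - f b| < r.
Proof. by move=> fl r r0; have [a0 h] := fl r r0; exists a0. Qed.

Section FiniteSpan.
Variables (R : realType) (X : normedModType R).
Implicit Types (s : seq X) (v w : X).

Fixpoint span_seq s : set X :=
  if s is v :: s' then [set w | exists a u, span_seq s' u /\ w = a *: v + u]
  else [set 0].

Lemma span_seqD s u w : span_seq s u -> span_seq s w -> span_seq s (u + w).
Proof.
elim: s u w => [|v s IH] u w /=; first by move=> -> ->; rewrite addr0.
move=> [a [u' [su' ->]]] [b [w' [sw' ->]]]; exists (a + b), (u' + w').
by split; [exact: IH | rewrite scalerDl addrACA].
Qed.

Lemma span_seqZ s k u : span_seq s u -> span_seq s (k *: u).
Proof.
elim: s u => [|v s IH] u /=; first by move=> ->; rewrite scaler0.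
move=> [a [u' [su' ->]]]; exists (k * a), (k *: u').
by split; [exact: IH | rewrite scalerDr scalerA].
Qed.

Lemma span_seq_sum s (c : 'I_(size s) -> R) :
  span_seq s (\sum_(i < size s) c i *: s`_i).
Proof.
elim: s c => [|v s IH] c /=; first by rewrite big_ord0.
rewrite big_ord_recl; exists (c ord0), (\sum_(i < size s) c (lift ord0 i) *: s`_i).
by split; first exact: IH.
Qed.

Lemma span_seq_cons_mem s v : span_seq s v -> span_seq (v :: s) = span_seq s.
Proof.
move=> sv; apply/seteqP; split=> w /=.
  by move=> [a [u [su ->]]]; apply: span_seqD => //; apply: span_seqZ.
by move=> sw; exists 0, w; rewrite scale0r add0r.
Qed.

Section AwayFromSpan.
Variables (s : seq X) (v : X) (d : R).
Hypothesis d_gt0 : 0 < d.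
Hypothesis v_far : forall u, span_seq s u -> d <= `|v - u|.

Lemma span_seq_coef_le a u : span_seq s u -> `|a| * d <= `|a *: v + u|.
Proof.
move=> su; have [->|a0] := eqVneq a 0; first by rewrite normr0 mul0r.
have -> : a *: v + u = a *: (v - (- a^-1) *: u).
  by rewrite scalerBr scalerA mulrN mulfV // scaleN1r opprK.
by rewrite normrZ ler_wpM2l // v_far //; apply: span_seqZ.
Qed.

Lemma span_seq_coef_uniq a1 a2 u1 u2 : span_seq s u1 -> span_seq s u2 ->
  a1 *: v + u1 = a2 *: v + u2 -> a1 = a2 /\ u1 = u2.
Proof.
move=> su1 su2 E.
have su : span_seq s (u1 - u2) by rewrite -scaleN1r; apply/span_seqD/span_seqZ.
have := span_seq_coef_le (a1 - a2) su.
rewrite scalerBl addrACA -opprD E subrr normr0 pmulr_lle0 // normr_le0 subr_eq0.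
by move=> /eqP a12; split=> //; move: E; rewrite a12 => /addrI.
Qed.

Lemma span_seq_cons_closed : closed (span_seq s) -> closed (span_seq (v :: s)).
Proof.
move=> cls w /closure_normP wcl.
have /choice [p pw] : forall k : nat, exists p : R * X,
    span_seq s p.2 /\ `|w - (p.1 *: v + p.2)| < k.+1%:R^-1.
  move=> k; have [_ [a [u [su ->]]] wu] := wcl _ (@harmonic_gt0 R k).
  by exists (a, u).
set f := fun k => (p k).1 *: v + (p k).2.
have f_cvg : f @ \oo --> w by apply: cvg_of_dist_lt_harmonic => k; exact: (pw k).2.
have /cvg_ex [l coef_cvg] : cvgn (fun k => (p k).1).
  apply: (@cvgn_of_dist_le _ _ (fun k => k.+1%:R^-1 / d)).
    by rewrite -(mul0r d^-1); apply: cvgMr_tmp; exact: cvg_harmonic.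
  move=> m n; rewrite -mulrDl ler_pdivlMr //.
  have su : span_seq s ((p m).2 - (p n).2).
    by rewrite -scaleN1r; apply/span_seqD/span_seqZ; [exact: (pw m).1 | exact: (pw n).1].
  apply: le_trans (span_seq_coef_le _ su) _.
  rewrite scalerBl addrACA -opprD -/(f m) -/(f n).
  apply: le_trans (ler_distD w _ _) _; rewrite distrC.
  by apply: lerD; apply/ltW; [exact: (pw m).2 | exact: (pw n).2].
have span_cvg : (fun k => (p k).2) @ \oo --> w - l *: v.
  have -> : (fun k => (p k).2) = (fun k => f k - (p k).1 *: v).
    by apply: funext => k; rewrite /f addrC addKr.
  by apply: cvgB => //; exact: cvgZr_tmp.
have su : span_seq s (w - l *: v).
  by apply: (closed_cvg _ cls _ _ span_cvg); apply: nearW => k; exact: (pw k).1.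
by exists l, (w - l *: v); split=> //; rewrite addrC subrK.
Qed.

Lemma span_seq_cons_decomp (T : X -> X) : linear_op T ->
    (forall x, span_seq (v :: s) (T x)) ->
  exists f T', [/\ forall (k : R) x z, f (k *: x + z) = k * f x + f z,
    linear_op T', forall x, span_seq s (T' x) & forall x, T x = f x *: v + T' x].
Proof.
move=> linT sT.
have /choice [g Tg] : forall x, exists p : R * X, span_seq s p.2 /\ T x = p.1 *: v + p.2.
  by move=> x; have [a [u [su ->]]] := sT x; exists (a, u).
have lin k x z : (g (k *: x + z)).1 = k * (g x).1 + (g z).1 /\
                 (g (k *: x + z)).2 = k *: (g x).2 + (g z).2.
  apply: span_seq_coef_uniq (Tg _).1 (span_seqD (span_seqZ k (Tg x).1) (Tg z).1) _.
  by rewrite -(Tg _).2 linT (Tg x).2 (Tg z).2 scalerDr scalerA scalerDl addrACA.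
exists (fun x => (g x).1), (fun x => (g x).2); split.
- by move=> k x z; exact: (lin k x z).1.
- by move=> k x z; exact: (lin k x z).2.
- by move=> x; exact: (Tg x).1.
- by move=> x; exact: (Tg x).2.
Qed.

End AwayFromSpan.

Lemma span_seq_far_or_mem s v : closed (span_seq s) ->
  (exists2 d, 0 < d & forall u, span_seq s u -> d <= `|v - u|) \/ span_seq s v.
Proof.
move=> cls; have [far|not_far] := pselect (exists2 d, 0 < d &
  forall u, span_seq s u -> d <= `|v - u|); [by left | right].
apply: cls; apply/closure_normP => e e0; apply: contra_notP not_far => ne.
by exists e => // u su; rewrite leNgt; apply/negP => vu; apply: ne; exists u.
Qed.

Lemma span_seq_closed s : closed (span_seq s).
Proof.
elim: s => [|v s IH] /=.
  by apply: accessible_closed_set1; apply: hausdorff_accessible; exact: norm_hausdorff.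
have [[d d0 far]|sv] := span_seq_far_or_mem v IH.
  exact: span_seq_cons_closed far IH.
by rewrite -/(span_seq (v :: s)) span_seq_cons_mem.
Qed.

Lemma span_seq_weakly_null s (T : X -> X) (L : R) (y : nat -> X) :
  linear_op T -> op_norm_le T L -> (forall x, span_seq s (T x)) ->
  weakly_null y -> (fun n => T (y n)) @ \oo --> 0.
Proof.
elim: s T L => [|v s IH] T L linT TL sT y0.
  by under eq_fun do rewrite (sT _ : T _ = 0); exact: cvg_cst.
have [[d d0 far]|sv] := span_seq_far_or_mem v (@span_seq_closed s); last first.
  by apply: IH linT TL _ y0 => x; rewrite -(span_seq_cons_mem sv).
have [f [T' [linf linT' sT' Tdec]]] := span_seq_cons_decomp d0 far linT sT.
have fL x : `|f x| <= L / d * `|x|.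
  rewrite mulrAC ler_pdivlMr //; apply: le_trans (TL x).
  by rewrite Tdec; apply: (span_seq_coef_le far).
have T'L : op_norm_le T' (L + L / d * `|v|).
  move=> x; have -> : T' x = T x - f x *: v by rewrite Tdec addrAC subrr add0r.
  apply: le_trans (ler_normB _ _) _; rewrite normrZ mulrDl lerD //.
  by rewrite mulrAC ler_wpM2r.
under eq_fun do rewrite Tdec; rewrite -(scale0r v) -[0 *: v]addr0.
apply: cvgD; last exact: IH linT' T'L sT' y0.
by apply: cvgZr_tmp; apply: (y0 _ linf); exact: bounded_linear_continuous linf fL.
Qed.

Lemma finite_rank_weakly_null (T : X -> X) (L : R) (y : nat -> X) :
  linear_op T -> finite_rank T -> op_norm_le T L ->
  weakly_null y -> (fun n => T (y n)) @ \oo --> 0.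
Proof.
move=> linT [s Ts] TL; apply: span_seq_weakly_null linT TL _ => x.
by have [c ->] := Ts x; exact: span_seq_sum.
Qed.

End FiniteSpan.

Section PartialSums.
Variables (R : realType) (X : normedModType R) (x : nat -> X).

Definition partial_sum (a : nat -> R) (N : nat) : X := \sum_(i < N) a i *: x i.

Lemma partial_sumB a b N :
  partial_sum (fun i => a i - b i) N = partial_sum a N - partial_sum b N.
Proof. by rewrite /partial_sum -sumrB; apply: eq_bigr => i _; rewrite scalerBl. Qed.

Lemma partial_sum_pad a N M : (N <= M)%N ->
  partial_sum (fun i => if (i < N)%N then a i else 0) M = partial_sum a N.
Proof.
move=> NM; rewrite /partial_sum (big_ord_widen M (fun i => a i *: x i) NM) [RHS]big_mkcond.
by apply: eq_bigr => i _; case: ifP; rewrite ?scale0r.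
Qed.

Lemma partial_sum_cvg (b : nat -> nat -> R) a N :
  (forall i, (fun l => b l i) @ \oo --> a i) ->
  (fun l => partial_sum (b l) N) @ \oo --> partial_sum a N.
Proof.
move=> ba; elim: N => [|N IH]; rewrite /partial_sum.
  by under eq_fun do rewrite big_ord0; rewrite big_ord0; exact: cvg_cst.
under eq_fun do rewrite big_ord_recr /=; rewrite big_ord_recr /=.
by apply: cvgD => //; apply: cvgZr_tmp.
Qed.

Lemma partial_sum_coef_le a N B c : (forall j, c <= `|x j|) ->
    (forall m, (m <= N)%N -> `|partial_sum a m| <= B) ->
  forall j, (j < N)%N -> `|a j| * c <= 2 * B.
Proof.
move=> x_ge aB j jN; apply: (@le_trans _ _ `|a j *: x j|).
  by rewrite normrZ ler_wpM2l.
have -> : a j *: x j = partial_sum a j.+1 - partial_sum a j.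
  by rewrite /partial_sum big_ord_recr /= addrAC subrr add0r.
apply: le_trans (ler_normB _ _) _; rewrite mulr2n mulrDl mul1r.
by apply: lerD; apply: aB => //; exact: ltnW.
Qed.

End PartialSums.

Section BasicCriterion.
Variables (R : realType) (X : normedModType R) (x : nat -> X) (K c : R).
Hypothesis c_gt0 : 0 < c.
Hypothesis x_ge : forall j, c <= `|x j|.
Hypothesis partial_sum_le : forall a m N, (m <= N)%N ->
  `|partial_sum x a m| <= K * `|partial_sum x a N|.

Let K_ge0 : 0 <= K.
Proof.
have := partial_sum_le (fun=> 1) (leqnn 1).
rewrite -{1}[`|_|]mul1r ler_pM2r ?(lt_le_trans c_gt0) //; last first.
  by rewrite /partial_sum big_ord1 scale1r.
exact: le_trans.
Qed.

Lemma basic_coef_uniq a b z : series_to a x z -> series_to b x z -> a = b.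
Proof.
move=> az bz; apply: funext => j; apply/eqP; rewrite -subr_eq0 -normr_le0.
rewrite -(pmulr_lle0 _ c_gt0).
have ab0 : (fun N => partial_sum x (fun i => a i - b i) N) @ \oo --> 0.
  by under eq_fun do rewrite partial_sumB; rewrite -(subrr z); exact: cvgB.
have bound0 : (fun N => 2 * (K * `|partial_sum x (fun i => a i - b i) N|)) @ \oo --> 0.
  by rewrite -(mulr0 2) -(mulr0 K) -(@normr0 _ X); do 2!apply: cvgMl_tmp; exact: cvg_norm.
apply: (ler_cvg_to (cvg_cst _) bound0); near=> N.
apply: (@partial_sum_coef_le _ _ x (fun i => a i - b i) N _ c x_ge) => [m mN|].
  exact: partial_sum_le.
by near: N; exists j.+1.
Unshelve. all: by end_near. Qed.

Lemma basic_coef_exists z : closure (lin_span x) z -> exists a, series_to a x z.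
Proof.
move=> /closure_normP zx.
have /choice [p zw] : forall m : nat, exists p : nat * (nat -> R),
    `|z - partial_sum x p.2 p.1| < m.+1%:R^-1.
  by move=> m; have [_ [N [b ->]] zw] := zx _ (@harmonic_gt0 R m); exists (N, b).
pose N m := (p m).1; pose b m := (p m).2.
pose beta m i := if (i < N m)%N then b m i else 0.
pose w m := partial_sum x (b m) (N m).
have betaE m n : (N m <= n)%N -> partial_sum x (beta m) n = w m.
  exact: partial_sum_pad.
have diff_le m l n :
    (`|partial_sum x (fun i => beta m i - beta l i) n| <= K * `|w m - w l|) /\
    (forall j, (j < n)%N -> `|beta m j - beta l j| * c <= 2 * (K * `|w m - w l|)).
  pose M := maxn n (maxn (N m) (N l)).
  have EM : partial_sum x (fun i => beta m i - beta l i) M = w m - w l.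
    by rewrite partial_sumB !betaE // !leq_max leqnn !orbT.
  split=> [|j jn]; rewrite -EM; first exact/partial_sum_le/leq_maxl.
  apply: (@partial_sum_coef_le _ _ x (fun i => beta m i - beta l i) M _ c x_ge) => [k kM|].
    exact: partial_sum_le.
  exact: leq_trans jn (leq_maxl _ _).
have wz : w @ \oo --> z := cvg_of_dist_lt_harmonic zw.
have /choice [a beta_cvg] : forall j, exists aj : R, (fun m => beta m j) @ \oo --> aj.
  move=> j; apply/cvg_ex; apply: (@cvgn_of_dist_le _ _ (fun m => 2 * K / c * m.+1%:R^-1)).
    by rewrite -(mulr0 (2 * K / c)); apply: cvgMl_tmp; exact: cvg_harmonic.
  move=> m l; rewrite -mulrDr mulrAC ler_pdivlMr //.
  apply: le_trans ((diff_le m l j.+1).2 j (ltnSn j)) _.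
  rewrite mulrA ler_wpM2l ?mulr_ge0 //.
  apply: le_trans (ler_distD z _ _) _; rewrite distrC.
  by apply: lerD; apply: ltW; exact: zw.
have tail_le m n :
    `|partial_sum x (beta m) n - partial_sum x a n| <= K * `|w m - z|.
  have lhs : (fun l => `|partial_sum x (fun i => beta m i - beta l i) n|) @ \oo -->
             `|partial_sum x (beta m) n - partial_sum x a n|.
    under eq_fun do rewrite partial_sumB.
    by apply: cvg_norm; apply: cvgB; [exact: cvg_cst | exact: partial_sum_cvg].
  have rhs : (fun l => K * `|w m - w l|) @ \oo --> K * `|w m - z|.
    by apply: cvgMl_tmp; apply: cvg_norm; apply: cvgB => //; exact: cvg_cst.
  exact: ler_cvg_to lhs rhs (nearW _ (fun l => (diff_le m l n).1)).
exists a; apply: (@cvg_of_tail_dist_le _ _ _ _ (1 + K) N) => m n Nn.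
have := tail_le m n; rewrite betaE // (distrC (w m) z) => wa.
apply: le_trans (ler_distD (w m) _ _) _; apply: le_trans (lerD (lexx _) wa) _.
rewrite -[X in X + _]mul1r -mulrDl ler_wpM2l ?addr_ge0 //; exact/ltW/zw.
Qed.

Lemma basic_seq_of_partial_sum_le : basic_seq x.
Proof.
move=> z zx; split; first exact: basic_coef_exists.
by move=> a b; exact: basic_coef_uniq.
Qed.

End BasicCriterion.

Section Perturbation.
Variables (R : realType) (X : normedModType R).
Variables (x : nat -> X) (Q : nat -> X -> X) (lam c : R) (delta : nat -> R).
Hypotheses (c_gt0 : 0 < c) (lam_ge0 : 0 <= lam) (x_ge : forall j, c <= `|x j|).
Hypotheses (linQ : forall k, linear_op (Q k)) (Q_le : forall k, op_norm_le (Q k) lam).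
Hypothesis Q_fix : forall j k, (j <= k)%N -> `|x j - Q k (x j)| <= delta j.
Hypothesis Q_kill : forall j k, (k < j)%N -> `|Q k (x j)| <= delta j.
Hypothesis delta_ge0 : forall j, 0 <= delta j.
Hypothesis delta_sum : forall N, \sum_(j < N) delta j <= c / 4.

Lemma Q_partial_sum_le a N k : (k < N)%N ->
  `|Q k (partial_sum x a N) - partial_sum x a k.+1| <= \sum_(j < N) `|a j| * delta j.
Proof.
move=> kN; rewrite /partial_sum (big_ord_widen N (fun i => a i *: x i) kN).
rewrite [X in _ - X]big_mkcond linear_op_sum // -sumrB.
apply: le_trans (ler_norm_sum _ _ _) _; apply: ler_sum => i _.
rewrite linear_opZ //; case: ifP => ik.
  by rewrite -scalerBr normrZ ler_wpM2l // distrC Q_fix.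
by rewrite subr0 normrZ ler_wpM2l // Q_kill // ltnNge -ltnS ik.
Qed.

Lemma perturbed_partial_sum_le a m N : (m <= N)%N ->
  `|partial_sum x a m| <= 2 * lam * `|partial_sum x a N|.
Proof.
set z := partial_sum x a N; set A := \sum_(j < N) `|a j| * delta j.
have A_ge0 : 0 <= A by apply: sumr_ge0 => j _; rewrite mulr_ge0.
have sum_le n : (n <= N)%N -> `|partial_sum x a n| <= lam * `|z| + A.
  case: n => [|k] kN; first by rewrite /partial_sum big_ord0 normr0 addr_ge0 ?mulr_ge0.
  have -> : partial_sum x a k.+1 = Q k z - (Q k z - partial_sum x a k.+1).
    by rewrite opprB addrC subrK.
  apply: le_trans (ler_normB _ _) _.
  by apply: lerD; [exact: Q_le | exact: Q_partial_sum_le].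
have coef_le := partial_sum_coef_le x_ge sum_le.
(* Each |a j| is at most 2 (lam |z| + A) / c and the delta j sum to at most c/4,
   so A <= (lam |z| + A) / 2. *)
have A_le : A <= lam * `|z|.
  have B_ge0 : 0 <= 2 * (lam * `|z| + A) / c.
    by rewrite divr_ge0 ?(ltW c_gt0) // mulr_ge0 // addr_ge0 // mulr_ge0.
  have : A <= 2 * (lam * `|z| + A) / c * (c / 4).
    apply: le_trans (ler_wpM2l B_ge0 (delta_sum N)); rewrite mulr_sumr.
    by apply: ler_sum => j _; rewrite ler_wpM2r // ler_pdivlMr // coef_le.
  have -> : 2 * (lam * `|z| + A) / c * (c / 4) = (lam * `|z| + A) / 2.
    by field; rewrite gt_eqF.
  lra.
move=> mN; apply: le_trans (sum_le m mN) _; lra.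
Qed.

Lemma perturbed_basic_seq : basic_seq x.
Proof.
exact: basic_seq_of_partial_sum_le c_gt0 x_ge perturbed_partial_sum_le.
Qed.

End Perturbation.

Section Construction.
Variables (R : realType) (X : normedModType R) (D : Type) (le : D -> D -> Prop).
Variables (P : D -> X -> X) (lam : R) (y e : nat -> X) (eps : nat -> R).
Hypotheses (dirD : directed_set le) (linP : forall a, linear_op (P a)).
Hypotheses (frP : forall a, finite_rank (P a)) (P_le : forall a, op_norm_le (P a) lam).
Hypotheses (P_cvg : forall x, net_cvg le (fun a => P a x) x) (y0 : weakly_null y).
Hypothesis eps_gt0 : forall k, 0 < eps k.

#[local] Instance tail_filter_properD : ProperFilter (tail_filter le) :=
  tail_filter_proper dirD.

(* [v j] (j < k) are the pairs (n_j, alpha_j) chosen so far, [t] is (n_k, alpha_k). *)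
Definition approx_step k (v : nat -> nat * D) (t : nat * D) : Prop :=
  [/\ forall j, (j < k)%N -> [/\ ((v j).1 < t.1)%N, le (v j).2 t.2,
        `|P (v j).2 (y t.1)| < eps k & `|y (v j).1 - P t.2 (y (v j).1)| < eps k],
      `|y t.1 - P t.2 (y t.1)| < eps k
    & forall j, (j <= k)%N -> `|e j - P t.2 (e j)| < eps k].

Lemma approx_step_exists k v : exists t, approx_step k v t.
Proof.
have /filter_ex [n nP] : \forall n \near \oo, forall j, (j < k)%N ->
    ((v j).1 < n)%N /\ `|P (v j).2 (y n)| < eps k.
  apply: near_forall_ltn => j _.
  apply/near_andP; split; first by exists (v j).1.+1.
  exact: (cvgr0_norm_lt _ (finite_rank_weakly_null (linP _) (frP _) (P_le _) y0)).
have /filter_ex [a [aP an ae]] : \forall a \near tail_filter le, [/\ forall j, (j < k)%N ->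
    le (v j).2 a /\ `|y (v j).1 - P a (y (v j).1)| < eps k,
    `|y n - P a (y n)| < eps k & forall j, (j < k.+1)%N -> `|e j - P a (e j)| < eps k].
  have Hj : \forall a \near tail_filter le, forall j, (j < k)%N ->
      le (v j).2 a /\ `|y (v j).1 - P a (y (v j).1)| < eps k.
    apply: near_forall_ltn => j _; apply/near_andP; split; first by exists (v j).2.
    exact: net_cvg_near.
  have He : \forall a \near tail_filter le, forall j, (j < k.+1)%N ->
      `|e j - P a (e j)| < eps k.
    by apply: near_forall_ltn => j _; exact: net_cvg_near.
  have Hn := net_cvg_near (P_cvg (y n)) (eps_gt0 k).
  by near=> a; split; near: a.
exists (n, a); split=> //= j jk.
by have [? ?] := nP j jk; have [? ?] := aP j jk.
Unshelve. all: by end_near. Qed.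

Lemma approximating_subsequence : exists (alpha : nat -> D) (n : nat -> nat),
  [/\ forall j k, (j < k)%N -> le (alpha j) (alpha k),
      forall j k, (j < k)%N -> (n j < n k)%N,
      forall j k, (j <= k)%N -> `|y (n j) - P (alpha k) (y (n j))| < eps k,
      forall j k, (k < j)%N -> `|P (alpha k) (y (n j))| < eps j
    & forall j k, (j <= k)%N -> `|e j - P (alpha k) (e j)| < eps k].
Proof.
have [[a0] _ _ _] := dirD.
have [u uP] := dependent_choice_prefix (0%N, a0) approx_step_exists.
have past j k : (j < k)%N -> [/\ ((u j).1 < (u k).1)%N, le (u j).2 (u k).2,
    `|P (u j).2 (y (u k).1)| < eps k & `|y (u j).1 - P (u k).2 (y (u j).1)| < eps k].
  by move=> jk; have [v vu [/(_ j jk)]] := uP k; rewrite vu.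
exists (fun k => (u k).2), (fun k => (u k).1); split.
- by move=> j k /past [].
- by move=> j k /past [].
- move=> j k; rewrite leq_eqVlt => /orP[/eqP ->|/past[] //].
  by have [v _ []] := uP k.
- by move=> j k /past [].
- by move=> j k jk; have [v _ [_ _ ]] := uP k; apply.
Qed.

End Construction.

Theorem lemma3p3 (R : realType) (X : completeNormedModType R)
  (D : Type) (le : D -> D -> Prop) (P : D -> X -> X) (lam : R)
  (K : set X) (y : nat -> X) :
  1 <= lam ->
  ext_approx_basis le P lam ->
  separable_set K ->
  (forall n, K (y n)) ->
  semi_normalized y ->
  weakly_null y ->
  exists (alpha : nat -> D) (n : nat -> nat),
    (forall i, le (alpha i) (alpha i.+1)) /\
    (forall i, (n i < n i.+1)%N) /\
    [/\ basic_seq (fun i => y (n i)),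
        (forall N : nat, (0 < N)%N ->
           (fun i => `| P (alpha i) (N%:R^-1 *:
              \sum_(1 <= k < N.+1) y (n (i + k)%N)) |) @ \oo --> (0 : R)),
        (fun i => `| y (n i) - P (alpha i) (y (n i)) |) @ \oo --> (0 : R)
      & (forall x, K x ->
           (fun i => `| x - P (alpha i) x |) @ \oo --> (0 : R))].
Proof.
move=> lam1 [dirD linfrP P_le P_cvg] [S [/pcard_surjP[e Se] SK KS]] _ [c [C [c0 yc]]] y0.
have linP a := (linfrP a).1.
have [eps [eps_gt0 eps_le eps_cvg eps_sum]] := summable_null_seq (divr_gt0 c0 (ltr0n R 4)).
have [alpha [n [alpha_le n_lt yPy Py ePe]]] := approximating_subsequence e dirD linP
  (fun a => (linfrP a).2) P_le P_cvg y0 eps_gt0.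
have eps_null (w : nat -> X) : (\forall i \near \oo, `|w i| <= eps i) ->
    (fun i => `|w i|) @ \oo --> 0.
  move=> we; apply: (squeeze_cvgr _ (cvg_cst 0) eps_cvg).
  by apply: filterS we => i wi; rewrite normr_ge0.
exists alpha, n; split; first by move=> i; exact: alpha_le.
split; first by move=> i; exact: n_lt.
split.
- apply: (@perturbed_basic_seq _ _ _ (fun k => P (alpha k)) lam c eps c0) => //.
  + exact: le_trans lam1.
  + by move=> j; have /andP[] := yc (n j).
  + by move=> j k jk; apply/ltW/(lt_le_trans (yPy j k jk)); exact: eps_le.
  + by move=> j k kj; exact/ltW/Py.
  + by move=> j; exact/ltW.
- move=> N N0; apply: eps_null; apply: nearW => i.
  apply: linear_op_mean_le => // k k0; apply/ltW/(lt_le_trans (Py _ _ _)).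
    by rewrite -addn1 leq_add2l.
  exact/eps_le/leq_addr.
- by apply: eps_null; apply: nearW => i; exact/ltW/yPy.
- move=> x Kx.
  apply: (@cvg_closure_of_bounded _ _ (fun k => P (alpha k)) lam (range e)) => //.
  + by move=> _ [j _ <-]; apply: eps_null; exists j => // k /= jk; exact/ltW/ePe.
  + by apply: closureS (KS x Kx) => s /Se [j _ <-]; exists j.
Qed.
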